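(* Fix $M>0$. If $c\in\ell_{\infty,M}(X^\ast,\mathbb{K}^\ell)$ and $d\in\ell_{\infty,M}(X^\ast,\mathbb{K}^m)$, then $c\circ d\in\ell_{\infty,M_\epsilon}(X^\ast,\mathbb{K}^\ell)$ for any $M_\epsilon=M(1+\epsilon)$ with $\epsilon>\phi(m\|d\|_{\ell_\infty,M})$, where $\phi(x)=x/2+\sqrt{x^2/4+x}$, and $$\|c\circ d\|_{\ell_\infty,M_\epsilon}\leq \|c\|_{\ell_\infty,M}\,(K_\epsilon\circ\phi)(m\|d\|_{\ell_\infty,M}),$$ where $K_\epsilon(a)=\sup_{\eta\in X^\ast}(|\eta|+1)(1+a)^{|\eta|}/(1+\epsilon)^{|\eta|}$.
   Context: $\mathbb{K}\in\{\mathbb{R},\mathbb{C}\}$. $X=\{x_0,x_1,\ldots,x_m\}$ is a finite alphabet, $X^\ast$ its set of words (including the empty word $\emptyset$), $|\eta|$ the length. $\mathbb{K}^\ell\langle\langle X\rangle\rangle$ is the set of maps $X^\ast\to\mathbb{K}^\ell$, written $c=\sum_\eta (c,\eta)\eta$. For $M>0$, $\|c\|_{\ell_\infty,M}=\sup_\eta|(c,\eta)|/(M^{|\eta|}|\eta|!)$ with $|z|=\max_i|z_i|$, and $\ell_{\infty,M}(X^\ast,\mathbb{K}^\ell)$ is the Banach space of series with finite norm. The shuffle product $\sqcup\!\sqcup$ is the bilinear product determined on words by $(x_i\eta)\sqcup\!\sqcup(x_j\xi)=x_i(\eta\sqcup\!\sqcup(x_j\xi))+x_j((x_i\eta)\sqcup\!\sqcup\xi)$,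 $\eta\sqcup\!\sqcup\emptyset=\emptyset\sqcup\!\sqcup\eta=\eta$. Composition product: for $c\in\mathbb{K}^\ell\langle\langle X\rangle\rangle$, $d\in\mathbb{K}^m\langle\langle X\rangle\rangle$ with components $d[1],\ldots,d[m]$ and $d[0]:=\mathbf{1}=1\cdot\emptyset$, let $\psi_d$ be the algebra homomorphism from words to linear endomorphisms of $\mathbb{K}\langle\langle X\rangle\rangle$ given by $\psi_d(\emptyset)=\mathrm{id}$, $\psi_d(x_i\eta)=\psi_d(x_i)\circ\psi_d(\eta)$, $\psi_d(x_i)(e)=x_0(d[i]\sqcup\!\sqcup e)$, $i=0,\ldots,m$; then $c\circ d=\sum_{\eta\in X^\ast}(c,\eta)\,\psi_d(\eta)(\mathbf{1})$. *)

From HB Require Import structures.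
From mathcomp Require Import all_boot all_order all_algebra.
From mathcomp Require Import all_classical all_reals.
From mathcomp Require Import ereal.
From mathcomp.real_closed Require Import complex.

Set Implicit Arguments.
Unset Strict Implicit.
Unset Printing Implicit Defensive.

Import Order.TTheory GRing.Theory Num.Theory.
Local Open Scope ring_scope.

(* Alphabet X = {x_0, ..., x_m} is 'I_m.+1 ; words are sequences of letters;
   the empty word is [::]. *)
Definition word (m : nat) := seq 'I_m.+1.

(* Shuffle product of two words, as a list of words (with multiplicity):
   (x_i u) ш (x_j v) = x_i (u ш x_j v) + x_j (x_i u ш v),  u ш [] = [] ш u = u *)
Fixpoint shw {T : Type} (u : seq T) : seq T -> seq (seq T) :=
  match u with
  | [::] => fun v => [:: v]
  | a :: u' =>
      fix shw_v (v : seq T) : seq (seq T) :=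
        match v with
        | [::] => [:: a :: u']
        | b :: v' => map (cons a) (shw u' v) ++ map (cons b) (shw_v v')
        end
  end.

Section Series.
Variable K : comNzRingType.
Variable m : nat.

Definition series := word m -> K.

Definition one_series : series := fun nu => (nu == [::])%:R.

(* bilinear extension of the word shuffle to series: since every word of
   u ш v has length |u|+|v|, the coefficient of nu only involves words u,v
   with |u| + |v| = |nu| (locally finite sum). *)
Definition shuffle (a b : series) : series := fun nu =>
  \sum_(i < (size nu).+1)
    \sum_(u : i.-tuple 'I_m.+1)
      \sum_(v : (size nu - i).-tuple 'I_m.+1)
        a u * b v *+ count_mem nu (shw (u : seq _) (v : seq _)).

(* d in K^m<<X>> is a map from words to K^m; its components are d[1..m],
   and d[0] := 1.  Component index i : 'I_m.+1 (the letter x_i). *)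
Definition dcomp (d : word m -> 'I_m -> K) (i : 'I_m.+1) : series :=
  match unlift ord0 i with
  | Some j => fun w => d w j
  | None => one_series
  end.

(* psi_d(x_i)(e) = x_0 (d[i] ш e) *)
Definition psi_letter (d : word m -> 'I_m -> K) (i : 'I_m.+1) (e : series)
  : series := fun nu =>
  match nu with
  | [::] => 0
  | x :: nu' => (x == ord0)%:R * shuffle (dcomp d i) e nu'
  end.

Definition psi (d : word m -> 'I_m -> K) (eta : word m) (e : series) : series :=
  foldr (psi_letter d) e eta.

(* Composition product c o d = sum_eta (c,eta) psi_d(eta)(1).  The series
   psi_d(eta)(1) is supported on words of length >= |eta|, so the coefficient
   of nu is the finite sum over words eta with |eta| <= |nu|. *)
Definition comp (l : nat) (c : word m -> 'I_l -> K) (d : word m -> 'I_m -> K)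
  : word m -> 'I_l -> K := fun nu j =>
  \sum_(k < (size nu).+1) \sum_(eta : k.-tuple 'I_m.+1)
     c eta j * psi d eta one_series nu.

End Series.

Definition phi (R : realType) (x : R) : R := x / 2 + Num.sqrt (x ^+ 2 / 4 + x).

Section Norms.
Variable R : realType.
Variable K : comNzRingType.
Variable absK : K -> R.
Variable m : nat.

Definition vabs (l : nat) (z : 'I_l -> K) : R := \big[Num.max/0]_(i < l) absK (z i).

(* ||c||_{l_oo,M} = sup_eta |(c,eta)| / (M^|eta| |eta|!), as an extended real;
   c is in l_{oo,M} iff this is < +oo. *)
Definition linf_norm (M : R) (l : nat) (c : word m -> 'I_l -> K) : \bar R :=
  ereal_sup [set ((vabs (c eta)) / (M ^+ size eta * (size eta)`!%:R))%:E
            | eta in [set: word m]].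

Definition Keps (eps a : R) : \bar R :=
  ereal_sup [set ((size eta).+1%:R * (1 + a) ^+ size eta / (1 + eps) ^+ size eta)%:E
            | eta in [set: word m]].

Definition composition_bound (M : R) (l : nat) : Prop :=
  forall (c : word m -> 'I_l -> K) (d : word m -> 'I_m -> K),
    (linf_norm M c < +oo)%E -> (linf_norm M d < +oo)%E ->
    forall eps : R,
      phi (m%:R * fine (linf_norm M d)) < eps ->
      (linf_norm (M * (1 + eps)) (comp c d) < +oo)%E /\
      (linf_norm (M * (1 + eps)) (comp c d)
        <= linf_norm M c * Keps eps (phi (m%:R * fine (linf_norm M d))))%E.

End Norms.

From Pilot Require Import Defs.
From HB Require Import structures.
From mathcomp Require Import all_boot all_order all_algebra.
From mathcomp Require Import all_classical all_reals.
From mathcomp Require Import ereal.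
From mathcomp.real_closed Require Import complex.
From mathcomp.algebra_tactics Require Import ring.

Set Implicit Arguments.
Unset Strict Implicit.
Unset Printing Implicit Defensive.

Import Order.TTheory GRing.Theory Num.Theory.
Local Open Scope ring_scope.

(* Let [n = |nu|].  Expanding [psi_d(eta)(1)] letter by letter, the coefficient
   of [nu] in a shuffle [d[i] ш e] involves the multiplicities of [nu] in the
   shuffles [u ш v]; over all [|u| = t], [|v| = n - t] these add up to [C(n, t)].
   Hence the coefficients at [nu] of the [psi_d(eta)(1)], [|eta| = k], have
   absolute values summing to at most [psi_majorant k n], a binomial
   convolution.  Scaled by [M^k k! / (M^n n!)], it is bounded by the
   coefficient of [x^n] in [P^k], where [P = x + a \sum_(i >= 1) x^i / i] and
   [a = m ||d||]; the coefficients of [\sum_k P^k = 1 / (1 - P)] are at most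
   [(1 + p)^n] for the root [p = phi(a)] of [p^2 = a (1 + p)].  Therefore
   [|(c o d, nu)| <= ||c|| M^n n! (1 + p)^n], and since [p < eps] this gives
   [||c o d||_(M(1+eps)) <= ||c|| <= ||c|| K_eps(p)], as [K_eps >= 1]. *)

Lemma big_tuple_cons (T : finType) (R : Type) (idx : R) (op : Monoid.com_law idx)
    n (F : n.+1.-tuple T -> R) :
  \big[op/idx]_(u : n.+1.-tuple T) F u =
  \big[op/idx]_(x : T) \big[op/idx]_(u : n.-tuple T) F [tuple of x :: u].
Proof.
rewrite pair_big (reindex (fun p : T * n.-tuple T => [tuple of p.1 :: p.2])) //=.
exists (fun u : n.+1.-tuple T => (thead u, [tuple of behead u])).
  by move=> [x t] _; congr pair; apply: val_inj.
by move=> u _; case/tupleP: u => x t; apply: val_inj.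
Qed.

Lemma big_tuple0 (T : finType) (R : Type) (idx : R) (op : Monoid.com_law idx)
    (F : 0.-tuple T -> R) :
  \big[op/idx]_(u : 0.-tuple T) F u = F [tuple].
Proof. by rewrite (big_pred1 [tuple]) // => u; apply/esym/eqP; exact: tuple0. Qed.

Lemma sum_tuple_eqseq (T : finType) n (s : seq T) : size s = n ->
  (\sum_(v : n.-tuple T) (val v == s))%N = 1%N.
Proof.
move=> size_s; rewrite (bigD1 (Tuple (introT eqP size_s))) //= eqxx big1 // => v.
by rewrite -val_eqE /= => /negbTE ->.
Qed.

Lemma sum_thead_pick (T : finType) n (c : T) (F : seq T -> nat) :
  (\sum_(u : n.+1.-tuple T) (thead u == c) * F (behead u))%N =
  (\sum_(v : n.-tuple T) F v)%N.
Proof.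
rewrite (big_tuple_cons addn) (bigD1 c) //= [X in (_ + X)%N]big1 ?addn0.
  by apply: eq_bigr => v _; rewrite theadE eqxx mul1n.
by move=> x /negbTE neq_xc; apply: big1 => v _; rewrite theadE neq_xc.
Qed.

Lemma shw_nilr (T : Type) (u : seq T) : shw u [::] = [:: u].
Proof. by case: u. Qed.

Lemma count_mem_map_cons (T : eqType) (a c : T) (nu : seq T) (s : seq (seq T)) :
  count_mem (c :: nu) (map (cons a) s) = ((a == c) * count_mem nu s)%N.
Proof.
rewrite count_map; case: eqP => [->|neq_ac].
  by rewrite mul1n; apply: eq_count => w /=; rewrite eqseq_cons eqxx.
rewrite mul0n; apply/eqP; rewrite -leqn0 leqNgt -has_count; apply/hasP => -[w _] /=.
by rewrite eqseq_cons => /andP[/eqP].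
Qed.

Lemma count_mem_shw_cons (T : eqType) (a b c : T) (nu u v : seq T) :
  count_mem (c :: nu) (shw (a :: u) (b :: v)) =
  ((a == c) * count_mem nu (shw u (b :: v)) +
   (b == c) * count_mem nu (shw (a :: u) v))%N.
Proof. by rewrite /= count_cat !count_mem_map_cons. Qed.

Lemma sum_count_shw (T : finType) (nu : seq T) i j : size nu = (i + j)%N ->
  (\sum_(u : i.-tuple T) \sum_(v : j.-tuple T)
     count_mem nu (shw (u : seq T) (v : seq T)))%N = 'C(i + j, i).
Proof.
elim: nu i j => [|c nu IH] [|i] [|j] // size_nu.
- by rewrite !big_tuple0.
- rewrite add0n in size_nu; rewrite big_tuple0 bin0 -(sum_tuple_eqseq size_nu).
  by apply: eq_bigr => v _ /=; rewrite addn0.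
- rewrite addn0 in size_nu *; rewrite binn -(sum_tuple_eqseq size_nu).
  by apply: eq_bigr => u _; rewrite big_tuple0 /= shw_nilr /= addn0.
have {}size_nu : size nu = (i + j.+1)%N by move: size_nu; rewrite addSn => -[].
have split_head (u : i.+1.-tuple T) (v : j.+1.-tuple T) :
    count_mem (c :: nu) (shw (u : seq T) (v : seq T)) =
    ((thead u == c) * count_mem nu (shw (behead u) v) +
     (thead v == c) * count_mem nu (shw u (behead v)))%N.
  by case/tupleP: u => a u; case/tupleP: v => b v; exact: count_mem_shw_cons.
transitivity (\sum_(u : i.+1.-tuple T) \sum_(v : j.+1.-tuple T)
                 (thead u == c) * count_mem nu (shw (behead u) v) +
              \sum_(u : i.+1.-tuple T) \sum_(v : j.+1.-tuple T)
                 (thead v == c) * count_mem nu (shw u (behead v)))%N.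
  rewrite -big_split; apply: eq_bigr => u _.
  by rewrite -big_split; apply: eq_bigr => v _; exact: split_head.
rewrite addSn binS [RHS]addnC; congr addn.
  rewrite exchange_big -(IH i j.+1 size_nu) [RHS]exchange_big; apply: eq_bigr => v _.
  exact: (sum_thead_pick i c (fun s => count_mem nu (shw s v))).
rewrite -addSnnS -IH; last by rewrite size_nu addSnnS.
apply: eq_bigr => u _.
exact: (sum_thead_pick j c (fun s => count_mem nu (shw u s))).
Qed.

Lemma le_geometric_step (R : realFieldType) (a p Q S : R) :
  0 <= a -> 0 <= p -> p ^+ 2 = a * (1 + p) -> p * S = Q - 1 ->
  (1 + a) * Q + a * S <= (1 + p) * Q.
Proof.
move=> a_ge0 p_ge0 p_root pS.
have gap : p * ((1 + p) * Q - ((1 + a) * Q + a * S)) = a.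
  apply/eqP; rewrite -subr_eq0.
  have -> : p * ((1 + p) * Q - ((1 + a) * Q + a * S)) - a =
            (p ^+ 2 - a * (1 + p)) * Q - a * (p * S - (Q - 1)) by ring.
  by rewrite p_root pS !subrr mul0r mulr0 subrr.
have [p0|p_neq0] := eqVneq p 0.
  have a0 : a = 0 by move: p_root; rewrite p0 expr0n addr0 mulr1.
  by rewrite a0 p0 mul0r !addr0.
have p_gt0 : 0 < p by rewrite lt_def p_neq0.
by rewrite -subr_ge0 -(pmulr_rge0 _ p_gt0) gap.
Qed.

Section Majorants.
Variables (R : realType) (m : nat) (D M : R).
Hypotheses (D_ge0 : 0 <= D) (M_gt0 : 0 < M).
Local Notation a := (m%:R * D).

Definition dcomp_majorant (i : 'I_m.+1) (t : nat) : R :=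
  if i == ord0 then (t == 0)%:R else D * (M ^+ t * t`!%:R).

Fixpoint psi_majorant (k n : nat) : R :=
  if k is k'.+1 then
    if n is n'.+1 then
      \sum_(t < n'.+1) 'C(n', t)%:R * ((t == 0)%:R + a * (M ^+ t * t`!%:R)) *
        psi_majorant k' (n' - t)
    else 0
  else (n == 0)%:R.

Lemma fact_weight_ge0 t : 0 <= M ^+ t * t`!%:R.
Proof. by rewrite mulr_ge0 // exprn_ge0 // ltW. Qed.

Lemma sum_dcomp_majorant t :
  \sum_(i < m.+1) dcomp_majorant i t = (t == 0)%:R + a * (M ^+ t * t`!%:R).
Proof.
rewrite big_ord_recl /dcomp_majorant eqxx; congr (_ + _).
rewrite (eq_bigr (fun _ => D * (M ^+ t * t`!%:R))) // sumr_const card_ord.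
by rewrite -[_ *+ m]mulr_natl mulrA.
Qed.

Lemma letter_weight_ge0 t : 0 <= (t == 0)%:R + a * (M ^+ t * t`!%:R).
Proof. exact: addr_ge0 (ler0n _ _) (mulr_ge0 (mulr_ge0 (ler0n _ _) D_ge0) (fact_weight_ge0 t)). Qed.

Lemma bin_fact_weight n t : (t <= n)%N ->
  'C(n, t)%:R * ((t == 0)%:R + a * (M ^+ t * t`!%:R)) * (M ^+ (n - t) * (n - t)`!%:R)
  = M ^+ n * n`!%:R * ((t == 0)%:R + a).
Proof.
case: t => [|t] le_tn /=; first by rewrite bin0 subn0 expr0 fact0; ring.
have splitM : M ^+ n = M ^+ t.+1 * M ^+ (n - t.+1) by rewrite -exprD subnKC.
by rewrite splitM -(bin_fact le_tn) !natrM; ring.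
Qed.

(* [x + a (x + x^2/2 + ... + x^(N+1)/(N+1))]: the constant term is [a / 0 = 0],
   and the derivative [1 + a (1 + x + ... + x^N)] is the normalised letter bound. *)
Definition maj_poly (N : nat) : {poly R} := \poly_(i < N.+2) ((i == 1)%:R + a / i%:R).

Lemma coef_maj_poly_ge0 N i : 0 <= (maj_poly N)`_i.
Proof. by rewrite coef_poly; case: ifP => // _; rewrite addr_ge0 ?divr_ge0 ?mulr_ge0. Qed.

Lemma coef0_maj_poly N : (maj_poly N)`_0 = 0.
Proof. by rewrite coef_poly /= invr0 mulr0 addr0. Qed.

Lemma coef_maj_polyX_ge0 N k i : 0 <= (maj_poly N ^+ k)`_i.
Proof.
elim: k i => [|k IH] i; first by rewrite expr0 coef1 ler0n.
by rewrite exprS coefM; apply: sumr_ge0 => j _; rewrite mulr_ge0 ?coef_maj_poly_ge0.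
Qed.

Lemma coef_deriv_maj_poly N t : (t <= N)%N -> (maj_poly N)^`()`_t = (t == 0)%:R + a.
Proof.
move=> le_tN; rewrite coef_deriv coef_poly !ltnS le_tN mulrnDl.
congr (_ + _); first by case: t {le_tN} => [|t] //=; rewrite mul0rn.
by rewrite -[LHS]mulr_natr mulfVK // pnatr_eq0.
Qed.

(* [(n+1) [P^(k+1)]_(n+1) = (k+1) \sum_t P'_t [P^k]_(n-t)] is the recursion
   of [psi_majorant] after normalisation by [M^n n!]. *)
Lemma psi_majorant_le_coef N k n : (n <= N)%N ->
  M ^+ k * k`!%:R * psi_majorant k n <= M ^+ n * n`!%:R * (maj_poly N ^+ k)`_n.
Proof.
elim: k n => [|k IH] [|n] le_nN /=.
- by rewrite expr0 coef1.
- by rewrite expr0 coef1 /= !mulr0.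
- by rewrite mulr0; exact: mulr_ge0 (fact_weight_ge0 0) (coef_maj_polyX_ge0 _ _ _).
have deriv_coef := congr1 (fun q : {poly R} => q`_n) (deriv_exp (maj_poly N) k.+1).
rewrite /= coef_deriv coefMn coefM -sumrMnl in deriv_coef.
have -> : M ^+ n.+1 * n.+1`!%:R * (maj_poly N ^+ k.+1)`_n.+1 =
    \sum_(t < n.+1) k.+1%:R * M * (M ^+ n * n`!%:R * (maj_poly N)^`()`_t) *
                    (maj_poly N ^+ k)`_(n - t).
  transitivity (M ^+ n * n`!%:R * M * ((maj_poly N ^+ k.+1)`_n.+1 *+ n.+1)).
    by rewrite factS exprS natrM -mulr_natr; ring.
  by rewrite deriv_coef mulr_sumr; apply: eq_bigr => t _; rewrite -mulr_natr; ring.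
rewrite mulr_sumr; apply: ler_sum => t _.
have le_tn : (t <= n)%N by rewrite -ltnS.
rewrite coef_deriv_maj_poly ?(leq_trans le_tn) 1?ltnW // -(bin_fact_weight le_tn).
set w := 'C(n, t)%:R * _.
have w_ge0 : 0 <= w by exact: mulr_ge0 (ler0n _ _) (letter_weight_ge0 t).
have -> : M ^+ k.+1 * k.+1`!%:R * (w * psi_majorant k (n - t)) =
          k.+1%:R * M * w * (M ^+ k * k`!%:R * psi_majorant k (n - t)).
  by rewrite factS exprS natrM; ring.
rewrite [X in _ <= X](_ : _ = k.+1%:R * M * w *
  (M ^+ (n - t) * (n - t)`!%:R * (maj_poly N ^+ k)`_(n - t))); last by ring.
apply: ler_wpM2l; first exact: mulr_ge0 (mulr_ge0 (ler0n _ _) (ltW M_gt0)) w_ge0.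
exact: IH (leq_trans (leq_subr _ _) (ltnW le_nN)).
Qed.

Variable p : R.
Hypotheses (p_ge0 : 0 <= p) (p_root : p ^+ 2 = a * (1 + p)).

Lemma maj_poly_weighted_le N n :
  \sum_(i < n.+2) (maj_poly N)`_i * (1 + p) ^+ (n.+1 - i) <= (1 + p) ^+ n.+1.
Proof.
have q_ge0 : 0 <= 1 + p by rewrite addr_ge0.
set S := \sum_(i < n) (1 + p) ^+ (n.-1 - i).
have pS : p * S = (1 + p) ^+ n - 1.
  have := subrXX (1 + p) 1 n; rewrite expr1n addrAC subrr add0r => ->.
  by congr (_ * _); apply: eq_bigr => i _; rewrite expr1n mulr1.
have coef1 : (maj_poly N)`_1 <= 1 + a by rewrite coef_poly /= divr1.
have coefSS i : (maj_poly N)`_i.+2 <= a.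
  rewrite coef_poly; case: ifP => _; last by rewrite mulr_ge0.
  by rewrite add0r ler_pdivrMr ?ltr0n // ler_peMr ?mulr_ge0 // ler1n.
rewrite 2!big_ord_recl coef0_maj_poly mul0r add0r exprS subn1.
apply: le_trans (le_geometric_step (mulr_ge0 (ler0n _ _) D_ge0) p_ge0 p_root pS).
apply: lerD; first by apply: ler_wpM2r; rewrite ?exprn_ge0.
rewrite mulr_sumr; apply: ler_sum => i _.
rewrite /= /bump /= !add1n subSS subnS -predn_sub.
by apply: ler_wpM2r; rewrite ?exprn_ge0.
Qed.

Lemma sum_coef_maj_polyX_le N n : (n <= N)%N ->
  \sum_(k < N.+1) (maj_poly N ^+ k)`_n <= (1 + p) ^+ n.
Proof.
elim/ltn_ind: n => n IH le_nN.
rewrite big_ord_recl expr0 coef1.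
have tail : \sum_(k < N) (maj_poly N ^+ bump 0 k)`_n <=
    \sum_(i < n.+1) (maj_poly N)`_i * \sum_(k < N.+1) (maj_poly N ^+ k)`_(n - i).
  under eq_bigr => k _ do rewrite exprS coefM.
  rewrite exchange_big; apply: ler_sum => i _ /=.
  rewrite -mulr_sumr; apply: ler_wpM2l; first exact: coef_maj_poly_ge0.
  by rewrite big_ord_recr /= lerDl coef_maj_polyX_ge0.
apply: le_trans (lerD (lexx _) tail) _.
case: n IH le_nN {tail} => [|n] IH le_nN.
  by rewrite big_ord1 coef0_maj_poly mul0r addr0 expr0.
rewrite add0r; apply: le_trans (maj_poly_weighted_le N n).
apply: ler_sum => -[[|i] lt_in] _ /=; first by rewrite coef0_maj_poly !mul0r.
apply: ler_wpM2l; first exact: coef_maj_poly_ge0.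
apply: IH; rewrite subSS ?ltnS ?leq_subr //.
exact: leq_trans (leq_subr _ _) (ltnW le_nN).
Qed.

Lemma sum_psi_majorant_le n :
  \sum_(k < n.+1) M ^+ k * k`!%:R * psi_majorant k n <= M ^+ n * n`!%:R * (1 + p) ^+ n.
Proof.
apply: (@le_trans _ _ (\sum_(k < n.+1) M ^+ n * n`!%:R * (maj_poly n ^+ k)`_n)).
  by apply: ler_sum => k _; exact: psi_majorant_le_coef.
rewrite -mulr_sumr; apply: ler_wpM2l; first exact: fact_weight_ge0.
exact: sum_coef_maj_polyX_le.
Qed.

End Majorants.

Lemma phi_ge0 (R : realType) (x : R) : 0 <= x -> 0 <= phi x.
Proof. by move=> x_ge0; rewrite /phi addr_ge0 ?sqrtr_ge0 ?divr_ge0. Qed.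

Lemma phi_root (R : realType) (x : R) : 0 <= x -> phi x ^+ 2 = x * (1 + phi x).
Proof.
move=> x_ge0; rewrite /phi.
have sqr_sqrt : Num.sqrt (x ^+ 2 / 4 + x) ^+ 2 = x ^+ 2 / 4 + x.
  by rewrite sqr_sqrtr // addr_ge0 // divr_ge0 // sqr_ge0.
set s := Num.sqrt _ in sqr_sqrt *.
apply/eqP; rewrite -subr_eq0.
have -> : (x / 2 + s) ^+ 2 - x * (1 + (x / 2 + s)) = s ^+ 2 - (x ^+ 2 / 4 + x) by field.
by rewrite sqr_sqrt subrr.
Qed.

Lemma Keps_ge1 (R : realType) m (eps a : R) : (1 <= Keps m eps a)%E.
Proof.
apply: ereal_sup_ubound; exists [::] => //=.
by rewrite !expr0 divr1 mulr1.
Qed.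

Section AbsoluteValue.
Variables (R : realType) (K : comNzRingType) (absK : K -> R).
Hypothesis absK_ge0 : forall x, 0 <= absK x.
Hypothesis absK0 : absK 0 = 0.
Hypothesis absK1 : absK 1 <= 1.
Hypothesis absKD : forall x y, absK (x + y) <= absK x + absK y.
Hypothesis absKM : forall x y, absK (x * y) <= absK x * absK y.

Lemma absK_sum I (r : seq I) (P : pred I) (F : I -> K) :
  absK (\sum_(i <- r | P i) F i) <= \sum_(i <- r | P i) absK (F i).
Proof.
elim/big_rec2: _ => [|i y1 y2 _ le_y]; first by rewrite absK0.
by apply: le_trans (absKD _ _) _; rewrite lerD2l.
Qed.

Lemma absKMn x n : absK (x *+ n) <= absK x *+ n.
Proof.
elim: n => [|n IH]; first by rewrite !mulr0n absK0.
by rewrite !mulrS (le_trans (absKD _ _)) // lerD2l.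
Qed.

Lemma absK_bool (b : bool) : absK b%:R <= 1.
Proof. by case: b; rewrite ?absK0. Qed.

Variable m : nat.

Lemma absK_shuffle_le (a b : series K m) nu :
  absK (shuffle a b nu) <=
  \sum_(i < (size nu).+1) \sum_(u : i.-tuple 'I_m.+1) \sum_(v : (size nu - i).-tuple 'I_m.+1)
    absK (a u) * absK (b v) * (count_mem nu (shw (u : seq _) (v : seq _)))%:R.
Proof.
rewrite /shuffle; apply: le_trans (absK_sum _ _ _) _; apply: ler_sum => i _.
apply: le_trans (absK_sum _ _ _) _; apply: ler_sum => u _.
apply: le_trans (absK_sum _ _ _) _; apply: ler_sum => v _.
by apply: le_trans (absKMn _ _) _; rewrite -[X in X <= _]mulr_natr; apply: ler_wpM2r.
Qed.

Lemma sum_absK_shuffle_le (E : finType) (a : series K m) (b : E -> series K m)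
    (alpha beta : nat -> R) nu :
  (forall u, absK (a u) <= alpha (size u)) ->
  (forall v, \sum_(e : E) absK (b e v) <= beta (size v)) ->
  \sum_(e : E) absK (shuffle a (b e) nu) <=
  \sum_(i < (size nu).+1) 'C(size nu, i)%:R * alpha i * beta (size nu - i)%N.
Proof.
move=> a_le b_le.
apply: le_trans (ler_sum _ (fun e _ => absK_shuffle_le a (b e) nu)) _.
rewrite exchange_big; apply: ler_sum => i _ /=.
have -> : 'C(size nu, i) = 'C(i + (size nu - i), i) by rewrite subnKC // -ltnS.
rewrite -(@sum_count_shw _ nu i (size nu - i)) ?subnKC -1?ltnS //.
rewrite exchange_big natr_sum !mulr_suml; apply: ler_sum => u _ /=.
rewrite exchange_big natr_sum !mulr_suml; apply: ler_sum => v _ /=.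
rewrite -!mulr_suml -mulr_sumr; set cnt := (count_mem _ _)%:R.
rewrite [X in _ <= X](_ : _ = alpha i * beta (size nu - i)%N * cnt); last by ring.
apply: ler_wpM2r => //; apply: ler_pM; rewrite ?sumr_ge0 //.
  by have := a_le u; rewrite size_tuple.
by have := b_le v; rewrite size_tuple.
Qed.

Lemma absK_dcomp_le (D M : R) (d : word m -> 'I_m -> K) :
  (forall w j, absK (d w j) <= D * (M ^+ size w * (size w)`!%:R)) ->
  forall i u, absK (dcomp d i u) <= dcomp_majorant D M i (size u).
Proof.
move=> d_le i u; rewrite /dcomp /dcomp_majorant; case: unliftP => [j ->|->].
  by rewrite eq_sym (negbTE (neq_lift _ _)).
by rewrite eqxx /one_series; case: u => [|x u] /=; rewrite ?absK0.
Qed.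

Lemma sum_absK_psi_le (D M : R) (d : word m -> 'I_m -> K) :
  (forall w j, absK (d w j) <= D * (M ^+ size w * (size w)`!%:R)) ->
  forall k nu, \sum_(eta : k.-tuple 'I_m.+1) absK (psi d eta (@one_series K m) nu)
               <= psi_majorant m D M k (size nu).
Proof.
move=> d_le; elim=> [|k IH] nu.
  by rewrite (big_tuple0 +%R) /= /one_series; case: nu => [|x nu] /=; rewrite ?absK0.
rewrite (big_tuple_cons +%R); case: nu => [|x nu] /=.
  by rewrite big1 // => i _; rewrite big1 // => eta _; rewrite absK0.
apply: (@le_trans _ _ (\sum_(i < m.+1) \sum_(eta : k.-tuple 'I_m.+1)
     absK (shuffle (dcomp d i) (psi d eta (@one_series K m)) nu))).
  apply: ler_sum => i _; apply: ler_sum => eta _.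
  apply: le_trans (absKM _ _) _; rewrite -[X in _ <= X]mul1r.
  by apply: ler_wpM2r; rewrite ?absK_bool.
apply: (@le_trans _ _ (\sum_(i < m.+1) \sum_(t < (size nu).+1) 'C(size nu, t)%:R *
    dcomp_majorant D M i t * psi_majorant m D M k (size nu - t)%N)).
  apply: ler_sum => i _; apply: sum_absK_shuffle_le => [u|v].
    exact: absK_dcomp_le.
  exact: IH.
rewrite exchange_big; apply: ler_sum => t _ /=.
under eq_bigr => i _ do rewrite mulrAC.
by rewrite -mulr_sumr sum_dcomp_majorant mulrAC.
Qed.

Lemma absK_comp_le l (c : word m -> 'I_l -> K) (d : word m -> 'I_m -> K) (C D M p : R) :
  0 <= C -> 0 <= D -> 0 < M -> 0 <= p -> p ^+ 2 = m%:R * D * (1 + p) ->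
  (forall w j, absK (c w j) <= C * (M ^+ size w * (size w)`!%:R)) ->
  (forall w j, absK (d w j) <= D * (M ^+ size w * (size w)`!%:R)) ->
  forall nu j,
    absK (Defs.comp c d nu j) <= C * (M ^+ size nu * (size nu)`!%:R * (1 + p) ^+ size nu).
Proof.
move=> C_ge0 D_ge0 M_gt0 p_ge0 p_root c_le d_le nu j.
apply: le_trans (absK_sum _ _ _) _.
apply: (@le_trans _ _ (C * \sum_(k < (size nu).+1)
                             M ^+ k * k`!%:R * psi_majorant m D M k (size nu))).
  rewrite mulr_sumr; apply: ler_sum => k _.
  apply: le_trans (absK_sum _ _ _) _.
  apply: (@le_trans _ _ (\sum_(eta : k.-tuple 'I_m.+1)
     C * (M ^+ k * k`!%:R) * absK (psi d eta (@one_series K m) nu))).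
    apply: ler_sum => eta _; apply: le_trans (absKM _ _) _.
    by apply: ler_wpM2r => //; have := c_le eta j; rewrite size_tuple.
  rewrite -mulr_sumr [X in _ <= X]mulrA; apply: ler_wpM2l.
    exact: mulr_ge0 C_ge0 (fact_weight_ge0 M_gt0 k).
  exact: sum_absK_psi_le.
by apply: ler_wpM2l => //; exact: sum_psi_majorant_le.
Qed.

Lemma linf_norm_ge0 (M : R) l (c : word m -> 'I_l -> K) :
  0 < M -> (0 <= linf_norm absK M c)%E.
Proof.
move=> M_gt0; apply: (@le_trans _ _ ((vabs absK (c [::]) / (M ^+ 0 * 0`!%:R))%:E)).
  rewrite lee_fin divr_ge0 ?expr0 ?mul1r //.
  by apply/bigmax_geP; left.
by apply: ereal_sup_ubound; exists [::].
Qed.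

Lemma absK_le_linf_norm (M : R) l (c : word m -> 'I_l -> K) :
  0 < M -> (linf_norm absK M c < +oo)%E ->
  forall w j, absK (c w j) <= fine (linf_norm absK M c) * (M ^+ size w * (size w)`!%:R).
Proof.
move=> M_gt0 c_fin w j.
have fin_c : linf_norm absK M c \is a fin_num by rewrite ge0_fin_numE ?linf_norm_ge0.
have : ((vabs absK (c w) / (M ^+ size w * (size w)`!%:R))%:E <= linf_norm absK M c)%E.
  by apply: ereal_sup_ubound; exists w.
rewrite -(fineK fin_c) lee_fin ler_pdivrMr; last first.
  by rewrite mulr_gt0 ?exprn_gt0 // ltr0n fact_gt0.
exact/le_trans/le_bigmax.
Qed.

Lemma linf_norm_le (M B : R) l (c : word m -> 'I_l -> K) : 0 < M -> 0 <= B ->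
  (forall w j, absK (c w j) <= B * (M ^+ size w * (size w)`!%:R)) ->
  (linf_norm absK M c <= B%:E)%E.
Proof.
move=> M_gt0 B_ge0 c_le; apply: ge_ereal_sup => _ [w _ <-].
rewrite lee_fin ler_pdivrMr; last by rewrite mulr_gt0 ?exprn_gt0 // ltr0n fact_gt0.
apply: bigmax_le => [|j _]; last exact: c_le.
exact: mulr_ge0 B_ge0 (fact_weight_ge0 M_gt0 _).
Qed.

Lemma composition_bound_abs (M : R) l : 0 < M -> composition_bound absK m M l.
Proof.
move=> M_gt0 c d c_fin d_fin eps lt_phi_eps.
set C := fine (linf_norm absK M c); set D := fine (linf_norm absK M d).
have C_ge0 : 0 <= C := fine_ge0 (linf_norm_ge0 c M_gt0).
have D_ge0 : 0 <= D := fine_ge0 (linf_norm_ge0 d M_gt0).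
have a_ge0 : 0 <= m%:R * D := mulr_ge0 (ler0n _ _) D_ge0.
set p := phi (m%:R * D) in lt_phi_eps *.
have p_ge0 : 0 <= p := phi_ge0 a_ge0.
have eps_gt0 : 0 < eps := le_lt_trans p_ge0 lt_phi_eps.
have comp_le := absK_comp_le C_ge0 D_ge0 M_gt0 p_ge0
  (phi_root a_ge0) (absK_le_linf_norm M_gt0 c_fin) (absK_le_linf_norm M_gt0 d_fin).
have norm_le : (linf_norm absK (M * (1 + eps)) (Defs.comp c d) <= C%:E)%E.
  apply: linf_norm_le => // [|w j]; first by rewrite mulr_gt0 // addr_gt0.
  apply: le_trans (comp_le w j) _; rewrite exprMn mulrAC; apply: ler_wpM2l => //.
  apply: ler_wpM2r => //; apply: ler_wpM2l; first by rewrite exprn_ge0 // ltW.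
  apply: lerXn2r; rewrite ?nnegrE ?lerD2l.
  - exact: addr_ge0.
  - exact: addr_ge0 _ (ltW eps_gt0).
  - exact: ltW.
split; first exact: le_lt_trans norm_le (ltry _).
have C_E : C%:E = linf_norm absK M c by rewrite fineK // ge0_fin_numE ?linf_norm_ge0.
apply: le_trans norm_le _; rewrite -C_E.
by apply: lee_pemulr; [rewrite lee_fin | exact: Keps_ge1].
Qed.

End AbsoluteValue.

Theorem lemma3p7 (R : realType) (M : R) (hM : 0 < M) (l m : nat) :
  composition_bound (K := R) (fun z => `|z|) m M l /\
  composition_bound (K := R[i]) (@Normc.normc R) m M l.
Proof.
split; apply: composition_bound_abs => //.
- exact: normr0.
- by rewrite normr1.
- exact: ler_normD.
- by move=> x y; rewrite normrM.
- by case=> x y; exact: sqrtr_ge0.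
- exact: Normc.normc0.
- by rewrite Normc.normc1.
- exact: le_normcD.
- by move=> x y; rewrite Normc.normcM.
Qed.
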